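(* Let $T>0$, $\alpha>0$ and $\hat\beta<0$ be constants, and let $\hat\varphi:\mathbb{R}\to\mathbb{R}$ be a continuous $T$-periodic function with $\int_0^T\hat\varphi(s)\,ds=0$. Assume $$\frac{1}{T}\int_0^T\Big(\int_0^\tau\hat\varphi(s)\,ds\Big)^2d\tau>\Big(\frac{1}{T}\int_0^T\tau\,\hat\varphi(\tau)\,d\tau\Big)^2-\hat\beta .$$ Then there exists a number $\mu_0>0$ such that for every $\mu\in(0,\mu_0]$ the zero solution of the linear equation $$y''+\alpha\mu y'+(\hat\beta\mu^2+\mu\hat\varphi(t))\,y=0$$ is asymptotically stable.
   Context: Asymptotic stability is meant in the Lyapunov sense for the equivalent first-order system in $(y,y')$. *)

From Stdlib Require Import Reals.
From Coquelicot Require Import Coquelicot.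
Open Scope R_scope.

(* (y, v) is a (global) solution of the first-order system equivalent to
   y'' + a y' + q(t) y = 0, i.e. y' = v, v' = - a v - q(t) y. *)
Definition is_solution (a : R) (q : R -> R) (y v : R -> R) : Prop :=
  forall t, is_derive y t (v t) /\ is_derive v t (- a * v t - q t * y t).

Definition state_norm (y v : R -> R) (t : R) : R :=
  sqrt (y t ^ 2 + v t ^ 2).

Definition lyap_stable (a : R) (q : R -> R) : Prop :=
  forall t0 eps, 0 < eps -> exists delta, 0 < delta /\
    forall y v, is_solution a q y v -> state_norm y v t0 < delta ->
      forall t, t0 <= t -> state_norm y v t < eps.

Definition attractive (a : R) (q : R -> R) : Prop :=
  forall t0, exists delta, 0 < delta /\
    forall y v, is_solution a q y v -> state_norm y v t0 < delta ->
      is_lim (fun t => state_norm y v t) p_infty (Finite 0).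

Definition asympt_stable (a : R) (q : R -> R) : Prop :=
  lyap_stable a q /\ attractive a q.

From Stdlib Require Import Reals Lra.
From Coquelicot Require Import Coquelicot.
Open Scope R_scope.

(* Let [F] be the primitive of [phi] with zero mean.  In the slow variable
   [Z = y' / mu + F y] the equation is an [O(mu)] perturbation of a system whose
   time average is the damped oscillator [y' = mu Z, Z' = - mu (kappa y + alpha Z)]
   with [kappa = betah + mean(F^2)]; the hypothesis of the theorem says exactly
   that [kappa > 0].  The standard quadratic Lyapunov form of that oscillator,
   corrected at order [mu] by bounded periodic terms built from primitives of
   [F] and [F^2 - mean(F^2)], decays exponentially along solutions once [mu] is
   small. *)

(* Differentiation rules for real functions, in ring form.  Coquelicot states
   them for general normed modules; these instances can be chained
   syntactically by the tactic [derive_tac] below. *)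

Lemma derive_plus (f g : R -> R) t a b : is_derive f t a -> is_derive g t b ->
  is_derive (fun x => f x + g x) t (a + b).
Proof. intros. apply (is_derive_plus f g); auto. Qed.

Lemma derive_minus (f g : R -> R) t a b : is_derive f t a -> is_derive g t b ->
  is_derive (fun x => f x - g x) t (a - b).
Proof. intros. apply (is_derive_minus f g); auto. Qed.

Lemma derive_opp (f : R -> R) t a : is_derive f t a -> is_derive (fun x => - f x) t (- a).
Proof. intros. apply (is_derive_opp f); auto. Qed.

Lemma derive_mult (f g : R -> R) t a b : is_derive f t a -> is_derive g t b ->
  is_derive (fun x => f x * g x) t (a * g t + f t * b).
Proof. intros. apply (is_derive_mult f g); auto. intros; apply Rmult_comm. Qed.

Lemma derive_sqr (f : R -> R) t a : is_derive f t a ->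
  is_derive (fun x => f x ^ 2) t (2 * f t * a).
Proof.
  intros H. apply (@is_derive_ext R_AbsRing R_NormedModule (fun x => f x * f x)).
  { intros x; simpl. ring. }
  replace (2 * f t * a) with (a * f t + f t * a) by ring. apply derive_mult; auto.
Qed.

Lemma derive_div_const (f : R -> R) t a c : is_derive f t a ->
  is_derive (fun x => f x / c) t (a / c).
Proof.
  intros H. apply (@is_derive_ext R_AbsRing R_NormedModule (fun x => / c * f x)).
  { intros x; simpl; unfold Rdiv; ring. }
  replace (a / c) with (/ c * a) by (unfold Rdiv; ring). apply is_derive_scal; auto.
Qed.

Lemma derive_const t c : is_derive (fun _ : R => c) t 0.
Proof. apply (is_derive_const c). Qed.

Lemma derive_id t : is_derive (fun x : R => x) t 1.
Proof. exact (@is_derive_id R_AbsRing t). Qed.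

Lemma derive_eq (f : R -> R) t a b : is_derive f t a -> a = b -> is_derive f t b.
Proof. intros H <-; exact H. Qed.

(* Coquelicot states many equalities at the carrier of a normed module; this
   exposes them as equalities of reals, so that [ring] and [field] apply. *)
Ltac real_eq := lazymatch goal with |- ?a = ?b => change (@eq R a b) end.

Ltac derive_tac := lazymatch goal with
  | |- is_derive (fun x => _ + _) _ _ => apply derive_plus; derive_tac
  | |- is_derive (fun x => _ - _) _ _ => apply derive_minus; derive_tac
  | |- is_derive (fun x => _ * _) _ _ => apply derive_mult; derive_tac
  | |- is_derive (fun x => _ ^ 2) _ _ => apply derive_sqr; derive_tac
  | |- is_derive (fun x => _ / _) _ _ => apply derive_div_const; derive_tac
  | |- is_derive (fun x => - _) _ _ => apply derive_opp; derive_tac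
  | |- is_derive (fun x => ?c) _ _ => apply derive_const
  | _ => eassumption
  end.

Lemma continuous_of_derive (f : R -> R) df t : is_derive f t df -> continuous f t.
Proof. intros H. apply (@ex_derive_continuous R_AbsRing R_NormedModule). eexists; exact H. Qed.

Lemma nonincreasing_of_derive (g : R -> R)
  (Hd : forall t, exists d, is_derive g t d /\ d <= 0) a b :
  a <= b -> g b <= g a.
Proof.
  intros Hab. destruct (Rle_lt_or_eq_dec a b Hab) as [Hl|He]; [|subst; lra].
  destruct (MVT_gen g a b (Derive g)) as [c [Hc Heq]].
  - intros x _. destruct (Hd x) as [d [H _]]. apply Derive_correct. exists d; exact H.
  - intros x _. destruct (Hd x) as [d [H _]]. apply continuity_pt_filterlim.
    eapply continuous_of_derive; exact H.
  - destruct (Hd c) as [d [H Hle]]. rewrite (is_derive_unique g c d H) in Heq.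
    assert (d * (b - a) <= 0) by (apply Rmult_le_0_r; lra). lra.
Qed.

Lemma ex_RInt_cont (f : R -> R) a b : (forall x, continuous f x) -> ex_RInt f a b.
Proof. intros H. apply (@ex_RInt_continuous R_CompleteNormedModule). intros; apply H. Qed.

Lemma RInt_plus' (f g : R -> R) a b : ex_RInt f a b -> ex_RInt g a b ->
  RInt (fun x => f x + g x) a b = RInt f a b + RInt g a b.
Proof. intros. exact (RInt_plus f g a b H H0). Qed.

Lemma RInt_minus' (f g : R -> R) a b : ex_RInt f a b -> ex_RInt g a b ->
  RInt (fun x => f x - g x) a b = RInt f a b - RInt g a b.
Proof. intros. exact (RInt_minus f g a b H H0). Qed.

Lemma RInt_scal' (f : R -> R) a b k : ex_RInt f a b ->
  RInt (fun x => k * f x) a b = k * RInt f a b.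
Proof. intros. exact (RInt_scal f a b k H). Qed.

Lemma RInt_const' a b c : RInt (fun _ => c) a b = (b - a) * c.
Proof. exact (@RInt_const R_CompleteNormedModule a b c). Qed.

Lemma derive_primitive (f : R -> R) (Hf : forall t, continuous f t) t :
  is_derive (fun x => RInt f 0 x) t (f t).
Proof.
  apply (is_derive_RInt f (fun x => RInt f 0 x) 0 t); [|apply Hf].
  apply filter_forall; intros b. apply (@RInt_correct R_CompleteNormedModule).
  apply ex_RInt_cont; exact Hf.
Qed.

(* The primitive of a T-periodic function with zero integral over a period is
   T-periodic: [x |-> RInt f 0 (x + T) - RInt f 0 x] has zero derivative. *)
Lemma primitive_periodic (f : R -> R) (T : R) (Hf : forall t, continuous f t)
  (Hp : forall t, f (t + T) = f t) (H0 : RInt f 0 T = 0) t :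
  RInt f 0 (t + T) = RInt f 0 t.
Proof.
  set (h := fun x : R => RInt f 0 (x + T) - RInt f 0 x).
  assert (Hd : forall x, is_derive h x zero).
  { intros x. unfold h. eapply derive_eq.
    - apply derive_minus; [|apply derive_primitive; auto].
      apply (is_derive_comp (fun x => RInt f 0 x) (fun x => x + T)).
      + apply derive_primitive; auto.
      + apply (derive_plus (fun x => x) (fun _ => T)); [apply derive_id|apply derive_const].
    - rewrite Hp. unfold scal, zero, one; simpl. unfold mult; simpl. ring. }
  assert (Hh : h t = h 0).
  { destruct (Rtotal_order t 0) as [Hl|[He|Hg]].
    - apply (eq_is_derive h t 0); [intros; apply Hd | exact Hl].
    - subst; reflexivity.
    - symmetry; apply (eq_is_derive h 0 t); [intros; apply Hd | exact Hg]. }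
  unfold h in Hh. rewrite Rplus_0_l, H0, RInt_point in Hh.
  unfold zero in Hh; simpl in Hh. lra.
Qed.

Lemma periodic_shift (g : R -> R) T (Hp : forall t, g (t + T) = g t) (n : nat) t :
  g (t + INR n * T) = g t.
Proof.
  induction n as [|n IH]; [simpl; f_equal; ring|].
  rewrite S_INR. replace (t + (INR n + 1) * T) with ((t + INR n * T) + T) by ring.
  rewrite Hp; exact IH.
Qed.

(* A continuous periodic function is bounded: its maximum on [0, T] bounds it
   everywhere, since every real is a period-translate of a point of [0, kT]. *)
Lemma periodic_bounded (g : R -> R) T : 0 < T -> (forall t, continuous g t) ->
  (forall t, g (t + T) = g t) -> exists M, forall t, Rabs (g t) <= M.
Proof.
  intros HT Hc Hp.
  destruct (continuity_ab_maj (fun x => Rabs (g x)) 0 T) as [x0 [Hx0 _]]; [lra| |].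
  { intros c _. apply continuity_pt_filterlim. apply continuous_Rabs_comp. apply Hc. }
  exists (Rabs (g x0)).
  assert (Hn : forall n : nat, forall x, 0 <= x <= INR (S n) * T -> Rabs (g x) <= Rabs (g x0)).
  { induction n as [|n IH]; intros x Hx.
    - apply Hx0. simpl in Hx; lra.
    - destruct (Rle_dec x T); [apply Hx0; lra|].
      replace x with ((x - T) + T) by ring. rewrite Hp. apply IH.
      rewrite S_INR in Hx. lra. }
  intros t.
  destruct (archimed (Rabs t / T)) as [Hup _].
  assert (Hz : (0 <= up (Rabs t / T))%Z).
  { apply le_IZR. assert (0 <= Rabs t / T) by (apply Rdiv_le_0_compat; [apply Rabs_pos|lra]). lra. }
  destruct (IZN _ Hz) as [k Hk]. rewrite Hk, <- INR_IZR_INZ in Hup.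
  rewrite <- (periodic_shift g T Hp k t). apply (Hn (k + k)%nat).
  assert (Hk' : Rabs t < INR k * T).
  { apply Rmult_lt_reg_r with (/T); [apply Rinv_0_lt_compat; lra|].
    rewrite Rmult_assoc, Rinv_r by lra. unfold Rdiv in Hup. lra. }
  rewrite S_INR, plus_INR.
  pose proof (Rle_abs t). pose proof (Rle_abs (-t)). rewrite Rabs_Ropp in *. lra.
Qed.

Lemma lyapunov_decay (Vf : R -> R -> R -> R) (c k1 k2 : R) (y v : R -> R) :
  0 < k1 ->
  (forall t Y W, k1 * (Y ^ 2 + W ^ 2) <= Vf t Y W <= k2 * (Y ^ 2 + W ^ 2)) ->
  (forall t, exists dV,
      is_derive (fun s => Vf s (y s) (v s)) t dV /\ dV <= - c * Vf t (y t) (v t)) ->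
  forall t0 t, t0 <= t ->
    y t ^ 2 + v t ^ 2 <= k2 / k1 * (y t0 ^ 2 + v t0 ^ 2) * exp (- c * (t - t0)).
Proof.
  intros Hk1 HV Hder t0 t Ht.
  (* [V(s) e^{cs}] is nonincreasing. *)
  set (g := fun s => Vf s (y s) (v s) * exp (c * s)).
  assert (Hg : g t <= g t0).
  { apply nonincreasing_of_derive; auto. intros s.
    destruct (Hder s) as [dV [H1 H2]].
    exists (dV * exp (c * s) + Vf s (y s) (v s) * (c * exp (c * s))). split.
    - apply (derive_mult (fun s => Vf s (y s) (v s)) (fun s => exp (c * s))); [exact H1|].
      eapply derive_eq.
      + apply (is_derive_comp exp (fun s => c * s)); [apply is_derive_exp|].
        apply is_derive_scal. apply derive_id.
      + unfold scal, one; simpl. unfold mult; simpl. ring.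
    - pose proof (exp_pos (c * s)). nra. }
  unfold g in Hg.
  destruct (HV t (y t) (v t)) as [Hl1 _]. destruct (HV t0 (y t0) (v t0)) as [_ Hu0].
  assert (He : exp (c * t0) = exp (c * t) * exp (- c * (t - t0))).
  { rewrite <- exp_plus. f_equal. ring. }
  pose proof (exp_pos (c * t)). pose proof (exp_pos (- c * (t - t0))).
  assert (HVt : Vf t (y t) (v t) <= Vf t0 (y t0) (v t0) * exp (- c * (t - t0))).
  { apply Rmult_le_reg_r with (exp (c * t)); auto. rewrite He in Hg. nra. }
  apply Rmult_le_reg_l with k1; auto.
  replace (k1 * (k2 / k1 * (y t0 ^ 2 + v t0 ^ 2) * exp (- c * (t - t0))))
    with (k2 * (y t0 ^ 2 + v t0 ^ 2) * exp (- c * (t - t0))) by (field; lra).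
  nra.
Qed.

Lemma decay_lyap_stable a q K c : 0 < K -> 0 <= c ->
  (forall y v, is_solution a q y v -> forall t0 t, t0 <= t ->
     y t ^ 2 + v t ^ 2 <= K * (y t0 ^ 2 + v t0 ^ 2) * exp (- c * (t - t0))) ->
  lyap_stable a q.
Proof.
  intros HK Hc Hdec t0 eps Heps.
  assert (HsK := sqrt_lt_R0 K HK).
  exists (eps / sqrt K). split; [apply Rdiv_lt_0_compat; auto|].
  intros y v Hs Hn t Ht. unfold state_norm in *.
  pose proof (Hdec y v Hs t0 t Ht) as HD.
  assert (Hexp : exp (- c * (t - t0)) <= 1).
  { rewrite <- exp_0. assert (Hneg : - c * (t - t0) <= 0) by nra.
    destruct (Rle_lt_or_eq_dec _ _ Hneg) as [Hl|He].
    - left; apply exp_increasing; exact Hl.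
    - rewrite He; right; reflexivity. }
  assert (HN0 : 0 <= y t0 ^ 2 + v t0 ^ 2) by nra.
  assert (HK0 : y t ^ 2 + v t ^ 2 <= K * (y t0 ^ 2 + v t0 ^ 2)).
  { eapply Rle_trans; [apply HD|]. rewrite <- (Rmult_1_r (K * _)) at 2.
    apply Rmult_le_compat_l; auto. apply Rmult_le_pos; lra. }
  assert (Hs0 := sqrt_pos (y t0 ^ 2 + v t0 ^ 2)).
  assert (Hlt : sqrt (y t0 ^ 2 + v t0 ^ 2) * sqrt K < eps).
  { apply Rmult_lt_reg_r with (/ sqrt K); [apply Rinv_0_lt_compat; auto|].
    rewrite Rmult_assoc, Rinv_r; lra. }
  apply Rle_lt_trans with (sqrt (K * (y t0 ^ 2 + v t0 ^ 2))).
  - apply sqrt_le_1_alt; auto.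
  - rewrite sqrt_mult; lra.
Qed.

Lemma decay_attractive a q K c : 0 < K -> 0 < c ->
  (forall y v, is_solution a q y v -> forall t0 t, t0 <= t ->
     y t ^ 2 + v t ^ 2 <= K * (y t0 ^ 2 + v t0 ^ 2) * exp (- c * (t - t0))) ->
  attractive a q.
Proof.
  intros HK Hc Hdec t0. exists 1. split; [lra|].
  intros y v Hs _. apply is_lim_spec. intros eps. simpl.
  set (N0 := y t0 ^ 2 + v t0 ^ 2).
  assert (HN0 : 0 <= N0) by (unfold N0; nra).
  assert (Hep : 0 < eps * eps) by (pose proof (cond_pos eps); nra).
  (* after time [t0 - ln r / c] the factor [e^{-c(t - t0)}] is below [r]. *)
  set (r := eps * eps / (K * N0 + 1)).
  assert (Hr : 0 < r) by (unfold r; apply Rdiv_lt_0_compat; nra).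
  exists (Rmax t0 (t0 - ln r / c)). intros t Ht.
  assert (Ht1 := Rle_lt_trans _ _ _ (Rmax_l _ _) Ht).
  assert (Ht2 := Rle_lt_trans _ _ _ (Rmax_r _ _) Ht).
  pose proof (Hdec y v Hs t0 t (Rlt_le _ _ Ht1)) as HD. fold N0 in HD.
  assert (Hex : exp (- c * (t - t0)) < r).
  { rewrite <- (exp_ln r Hr). apply exp_increasing.
    assert (Hlt : - ln r / c < t - t0) by lra.
    apply Rmult_lt_compat_l with (r := c) in Hlt; auto.
    unfold Rdiv in Hlt. rewrite <- Rmult_assoc, (Rmult_comm c), Rmult_assoc, Rinv_r in Hlt; lra. }
  pose proof (exp_pos (- c * (t - t0))).
  assert (Hsq : y t ^ 2 + v t ^ 2 < eps * eps).
  { apply Rle_lt_trans with ((K * N0 + 1) * exp (- c * (t - t0))); [nra|].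
    replace (eps * eps) with ((K * N0 + 1) * r) by (unfold r; field; nra).
    apply Rmult_lt_compat_l; nra. }
  unfold state_norm. rewrite Rminus_0_r, Rabs_pos_eq by apply sqrt_pos.
  rewrite <- (sqrt_square eps) by (pose proof (cond_pos eps); lra).
  apply sqrt_lt_1_alt. split; nra.
Qed.

Lemma lyapunov_asympt_stable (a : R) (q : R -> R) (Vf : R -> R -> R -> R) (c k1 k2 : R) :
  0 < c -> 0 < k1 -> 0 < k2 ->
  (forall t Y W, k1 * (Y ^ 2 + W ^ 2) <= Vf t Y W <= k2 * (Y ^ 2 + W ^ 2)) ->
  (forall y v, is_solution a q y v -> forall t, exists dV,
      is_derive (fun s => Vf s (y s) (v s)) t dV /\ dV <= - c * Vf t (y t) (v t)) ->
  asympt_stable a q.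
Proof.
  intros Hc Hk1 Hk2 HV Hder.
  assert (HK : 0 < k2 / k1) by (apply Rdiv_lt_0_compat; lra).
  assert (Hdec : forall y v, is_solution a q y v -> forall t0 t, t0 <= t ->
     y t ^ 2 + v t ^ 2 <= k2 / k1 * (y t0 ^ 2 + v t0 ^ 2) * exp (- c * (t - t0))).
  { intros y v Hs. apply (lyapunov_decay Vf c k1 k2 y v Hk1 HV (Hder y v Hs)). }
  split.
  - apply (decay_lyap_stable a q _ c HK (Rlt_le _ _ Hc) Hdec).
  - apply (decay_attractive a q _ c HK Hc Hdec).
Qed.

(* The tactic [bound_tac] bounds
   [Rabs e] for a polynomial expression [e] in bounded quantities, producing
   the bound as an evar; it is used to show that functions built from bounded
   functions are bounded. *)

Lemma abs_le_inv x b : Rabs x <= b -> - b <= x <= b.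
Proof.
  intros. pose proof (Rle_abs x). pose proof (Rle_abs (-x)). rewrite Rabs_Ropp in *. lra.
Qed.

Lemma bound_plus a b A B : Rabs a <= A -> Rabs b <= B -> Rabs (a + b) <= A + B.
Proof. intros. eapply Rle_trans; [apply Rabs_triang|lra]. Qed.

Lemma bound_minus a b A B : Rabs a <= A -> Rabs b <= B -> Rabs (a - b) <= A + B.
Proof. intros. eapply Rle_trans; [apply Rabs_triang|rewrite Rabs_Ropp; lra]. Qed.

Lemma bound_mult a b A B : Rabs a <= A -> Rabs b <= B -> Rabs (a * b) <= A * B.
Proof. intros. rewrite Rabs_mult. apply Rmult_le_compat; auto; apply Rabs_pos. Qed.

Lemma bound_sqr a A : Rabs a <= A -> Rabs (a ^ 2) <= A * A.
Proof. intros. replace (a ^ 2) with (a * a) by ring. apply bound_mult; auto. Qed.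

Lemma bound_opp a A : Rabs a <= A -> Rabs (- a) <= A.
Proof. intros. rewrite Rabs_Ropp; auto. Qed.

Ltac bound_tac := first
  [ apply bound_plus; bound_tac | apply bound_minus; bound_tac
  | apply bound_mult; bound_tac | apply bound_sqr; bound_tac
  | apply bound_opp; bound_tac | solve [eauto] | apply Rle_refl ].

Lemma quadratic_form_bound e1 e2 e3 B Y Z :
  Rabs e1 <= B -> Rabs e2 <= B -> Rabs e3 <= B ->
  Rabs (e1 * Y ^ 2 + e2 * Y * Z + e3 * Z ^ 2) <= 2 * B * (Y ^ 2 + Z ^ 2).
Proof.
  intros H1 H2 H3.
  assert (HB : 0 <= B) by (pose proof (Rabs_pos e1); lra).
  assert (HY : Rabs Y ^ 2 = Y ^ 2) by (rewrite RPow_abs; apply Rabs_pos_eq; nra).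
  assert (HZ : Rabs Z ^ 2 = Z ^ 2) by (rewrite RPow_abs; apply Rabs_pos_eq; nra).
  assert (Hcross : 2 * (Rabs Y * Rabs Z) <= Y ^ 2 + Z ^ 2).
  { rewrite <- HY, <- HZ. pose proof (pow2_ge_0 (Rabs Y - Rabs Z)). nra. }
  eapply Rle_trans; [apply Rabs_triang|].
  eapply Rle_trans; [apply Rplus_le_compat_r, Rabs_triang|].
  rewrite !Rabs_mult, <- !RPow_abs, HY, HZ.
  pose proof (Rabs_pos Y). pose proof (Rabs_pos Z).
  assert (Rabs e1 * Y ^ 2 <= B * Y ^ 2) by (apply Rmult_le_compat_r; nra).
  assert (Rabs e3 * Z ^ 2 <= B * Z ^ 2) by (apply Rmult_le_compat_r; nra).
  assert (Rabs e2 * Rabs Y * Rabs Z <= B * (Rabs Y * Rabs Z)).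
  { rewrite Rmult_assoc. apply Rmult_le_compat_r; nra. }
  nra.
Qed.

(* The Lyapunov form [(k + a^2/2) Y^2 + a Y Z + Z^2] of the damped oscillator
   [Y' = Z, Z' = - k Y - a Z] lies between [k Y^2 + Z^2/2] and [K0 (Y^2 + Z^2)];
   both bounds survive a perturbation of the coefficients of size [mu B]
   when [2 B mu <= lam / 2]. *)
Lemma perturbed_form_bounds kap alpha mu lam K0 B pt qt rt Y Z :
  0 < alpha -> lam <= kap -> lam <= 1/2 -> K0 = kap + alpha ^ 2 / 2 + alpha / 2 + 1 ->
  0 < mu -> 2 * B * mu <= lam / 2 ->
  Rabs pt <= B -> Rabs qt <= B -> Rabs rt <= B ->
  lam / 2 * (Y ^ 2 + Z ^ 2) <=
  (kap + alpha ^ 2 / 2 + mu * pt) * Y ^ 2 + (alpha + mu * qt) * Y * Z + (1 + mu * rt) * Z ^ 2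
  <= (K0 + lam / 2) * (Y ^ 2 + Z ^ 2).
Proof.
  intros Ha Hl1 Hl2 HK Hmu HB Hp Hq Hr.
  pose proof (abs_le_inv _ _ (quadratic_form_bound pt qt rt B Y Z Hp Hq Hr)) as Hpert.
  assert (HS : 0 <= Y ^ 2 + Z ^ 2) by nra.
  assert (Hmb : mu * (2 * B * (Y ^ 2 + Z ^ 2)) <= lam / 2 * (Y ^ 2 + Z ^ 2)) by nra.
  replace ((kap + alpha ^ 2 / 2 + mu * pt) * Y ^ 2 + (alpha + mu * qt) * Y * Z
           + (1 + mu * rt) * Z ^ 2)
    with ((kap + alpha ^ 2 / 2) * Y ^ 2 + alpha * Y * Z + Z ^ 2
          + mu * (pt * Y ^ 2 + qt * Y * Z + rt * Z ^ 2)) by ring.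
  assert (Hlo : kap * Y ^ 2 + Z ^ 2 / 2 <= (kap + alpha ^ 2 / 2) * Y ^ 2 + alpha * Y * Z + Z ^ 2).
  { pose proof (pow2_ge_0 (alpha * Y + Z)). nra. }
  assert (Hhi : (kap + alpha ^ 2 / 2) * Y ^ 2 + alpha * Y * Z + Z ^ 2 <= K0 * (Y ^ 2 + Z ^ 2)).
  { pose proof (pow2_ge_0 (Y - Z)). subst K0. nra. }
  assert (lam * (Y ^ 2 + Z ^ 2) <= kap * Y ^ 2 + Z ^ 2 / 2) by nra.
  split; nra.
Qed.

Lemma slow_variable_equiv (mu B f y v : R) : 0 < mu -> Rabs f <= B ->
  y ^ 2 + (v / mu + f * y) ^ 2 <= (1 + 2 * B ^ 2 + 2 / mu ^ 2) * (y ^ 2 + v ^ 2) /\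
  y ^ 2 + v ^ 2 <= (1 + 2 * mu ^ 2 * (1 + B ^ 2)) * (y ^ 2 + (v / mu + f * y) ^ 2).
Proof.
  intros Hmu Hf.
  assert (Hf2 : f ^ 2 * y ^ 2 <= B ^ 2 * y ^ 2).
  { apply abs_le_inv in Hf. apply Rmult_le_compat_r; nra. }
  set (Z := v / mu + f * y).
  assert (Hv : v = mu * (Z - f * y)) by (unfold Z; field; lra).
  split.
  - assert (Z ^ 2 <= 2 * (v / mu) ^ 2 + 2 * (f * y) ^ 2).
    { unfold Z. pose proof (pow2_ge_0 (v / mu - f * y)). nra. }
    assert ((v / mu) ^ 2 = v ^ 2 / mu ^ 2) by (field; lra).
    assert (v ^ 2 / mu ^ 2 <= (1 / mu ^ 2) * (y ^ 2 + v ^ 2)).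
    { unfold Rdiv. rewrite Rmult_1_l. assert (0 < / mu ^ 2) by (apply Rinv_0_lt_compat; nra).
      pose proof (pow2_ge_0 y). nra. }
    assert (0 <= 1 / mu ^ 2) by (apply Rlt_le, Rdiv_lt_0_compat; nra).
    assert (0 <= B ^ 2 * v ^ 2) by nra.
    unfold Rdiv in *. nra.
  - rewrite Hv.
    assert ((Z - f * y) ^ 2 <= 2 * Z ^ 2 + 2 * B ^ 2 * y ^ 2).
    { pose proof (pow2_ge_0 (Z + f * y)). nra. }
    assert (mu ^ 2 * (Z - f * y) ^ 2 <= mu ^ 2 * (2 * Z ^ 2 + 2 * B ^ 2 * y ^ 2))
      by (apply Rmult_le_compat_l; nra).
    assert (0 <= mu ^ 2 * B ^ 2 * Z ^ 2) by (pose proof (pow2_ge_0 B); pose proof (pow2_ge_0 Z); nra).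
    assert (0 <= mu ^ 2 * y ^ 2) by nra.
    replace ((mu * (Z - f * y)) ^ 2) with (mu ^ 2 * (Z - f * y) ^ 2) by ring.
    nra.
Qed.

(* Let [F] be a primitive of [phi], [G1] a primitive
   of [F] and [G2] a primitive of [F^2 - s], all bounded.  For a solution
   [(y, v)] of [y'' + alpha mu y' + (beta mu^2 + mu phi) y = 0] the slow variable
   [Z = v / mu + F y] satisfies
     [y' = mu (Z - F y)],   [Z' = mu ((F - alpha) Z - (beta + F^2 - alpha F) y)],
   whose average over time is the damped oscillator
   [y' = mu Z, Z' = - mu (kappa y + alpha Z)] with [kappa = beta + s].  Its
   Lyapunov form is corrected by [mu (p y^2 + q y Z + r Z^2)], the periodic
   correctors [p, q, r] being chosen so that the oscillating first-order terms
   cancel; what remains of the derivative is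
   [- mu alpha (kappa y^2 + Z^2) + O(mu^2) (y^2 + Z^2)]. *)
Section Averaging.

Variables (alpha beta s : R) (phi F G1 G2 : R -> R).
Hypothesis Halpha : 0 < alpha.
Hypothesis Hkappa : 0 < beta + s.
Hypothesis HF : forall t, is_derive F t (phi t).
Hypothesis HG1 : forall t, is_derive G1 t (F t).
Hypothesis HG2 : forall t, is_derive G2 t (F t ^ 2 - s).

Definition kappa := beta + s.

Definition corr_p t := 2 * kappa * G1 t + alpha * G2 t.
Definition corr_q t := 2 * G2 t - 2 * alpha * G1 t.
Definition corr_r t := - (2 * G1 t).

(* Coefficients of the second-order remainder of the derivative. *)
Definition rem1 t := - (2 * corr_p t * F t) + corr_q t * (alpha * F t - beta - F t ^ 2).
Definition rem2 t := 2 * corr_p t - corr_q t * F t + corr_q t * (F t - alpha)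
  + 2 * corr_r t * (alpha * F t - beta - F t ^ 2).
Definition rem3 t := corr_q t + 2 * corr_r t * (F t - alpha).

Definition slow_var mu t y v := v / mu + F t * y.

Definition lyap mu t y v :=
  (kappa + alpha ^ 2 / 2 + mu * corr_p t) * y ^ 2
  + (alpha + mu * corr_q t) * y * slow_var mu t y v
  + (1 + mu * corr_r t) * slow_var mu t y v ^ 2.

Lemma lyap_derivative mu y v t : mu <> 0 ->
  is_solution (alpha * mu) (fun t => beta * mu ^ 2 + mu * phi t) y v ->
  is_derive (fun t => lyap mu t (y t) (v t)) t
    (- mu * alpha * (kappa * y t ^ 2 + slow_var mu t (y t) (v t) ^ 2)
     + mu ^ 2 * (rem1 t * y t ^ 2 + rem2 t * y t * slow_var mu t (y t) (v t)
                 + rem3 t * slow_var mu t (y t) (v t) ^ 2)).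
Proof.
  intros Hmu Hs.
  destruct (Hs t) as [Hy Hv].
  pose proof (HF t). pose proof (HG1 t). pose proof (HG2 t).
  unfold lyap, slow_var, corr_p, corr_q, corr_r.
  eapply derive_eq; [derive_tac|].
  unfold rem1, rem2, rem3, corr_p, corr_q, corr_r, kappa.
  real_eq. field; exact Hmu.
Qed.

Section SmallParameter.

(* Constants of the averaged problem: [lam] controls the lower bound of the
   form, [om] its dissipation rate, [K0] its upper bound. *)
Definition lam := Rmin kappa (1 / 2).
Definition om := alpha * Rmin kappa 1.
Definition K0 := kappa + alpha ^ 2 / 2 + alpha / 2 + 1.

Lemma lam_pos : 0 < lam.
Proof. unfold lam, kappa. apply Rmin_glb_lt; lra. Qed.

Lemma om_pos : 0 < om.
Proof. unfold om, kappa. apply Rmult_lt_0_compat; auto. apply Rmin_glb_lt; lra. Qed.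

Lemma K0_pos : 0 < K0.
Proof. unfold K0, kappa. nra. Qed.

Variables (B mu : R).
Hypothesis HBF : forall t, Rabs (F t) <= B.
Hypothesis HBp : forall t, Rabs (corr_p t) <= B.
Hypothesis HBq : forall t, Rabs (corr_q t) <= B.
Hypothesis HBr : forall t, Rabs (corr_r t) <= B.
Hypothesis HB1 : forall t, Rabs (rem1 t) <= B.
Hypothesis HB2 : forall t, Rabs (rem2 t) <= B.
Hypothesis HB3 : forall t, Rabs (rem3 t) <= B.
Hypothesis Hmu : 0 < mu.
Hypothesis Hmu_lam : 2 * B * mu <= lam / 2.
Hypothesis Hmu_om : 2 * B * mu <= om / 2.

Lemma lyap_slow_bounds t y v :
  lam / 2 * (y ^ 2 + slow_var mu t y v ^ 2) <= lyap mu t y v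
  <= (K0 + lam / 2) * (y ^ 2 + slow_var mu t y v ^ 2).
Proof.
  apply perturbed_form_bounds with (B := B); auto.
  - apply Rmin_l.
  - apply Rmin_r.
Qed.

Lemma lyap_bounds t y v :
  lam / 2 / (1 + 2 * mu ^ 2 * (1 + B ^ 2)) * (y ^ 2 + v ^ 2) <= lyap mu t y v
  <= (K0 + lam / 2) * (1 + 2 * B ^ 2 + 2 / mu ^ 2) * (y ^ 2 + v ^ 2).
Proof.
  pose proof lam_pos. pose proof K0_pos.
  destruct (slow_variable_equiv mu B (F t) y v Hmu (HBF t)) as [N1 N2].
  destruct (lyap_slow_bounds t y v) as [V1 V2]. unfold slow_var in V1, V2.
  set (c1 := 1 + 2 * mu ^ 2 * (1 + B ^ 2)) in *.
  assert (Hc1 : 0 < c1) by (unfold c1; nra).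
  split.
  - apply Rle_trans with (lam / 2 * (y ^ 2 + (v / mu + F t * y) ^ 2)); auto.
    replace (lam / 2 / c1 * (y ^ 2 + v ^ 2)) with (lam / 2 * (/ c1 * (y ^ 2 + v ^ 2)))
      by (field; lra).
    apply Rmult_le_compat_l; [lra|]. apply Rmult_le_reg_l with c1; auto.
    rewrite <- Rmult_assoc, Rinv_r, Rmult_1_l by lra. exact N2.
  - eapply Rle_trans; [apply V2|]. rewrite Rmult_assoc. apply Rmult_le_compat_l; lra.
Qed.

(* Along solutions the corrected form decays at the rate [mu om / (2 (K0 + lam/2))]:
   the averaged dissipation [mu alpha (kappa y^2 + Z^2) >= mu om (y^2 + Z^2)]
   dominates twice the [O(mu^2)] remainder. *)
Lemma lyap_decrease y v t :
  is_solution (alpha * mu) (fun t => beta * mu ^ 2 + mu * phi t) y v ->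
  exists dV, is_derive (fun s => lyap mu s (y s) (v s)) t dV /\
    dV <= - (mu * om / (2 * (K0 + lam / 2))) * lyap mu t (y t) (v t).
Proof.
  intros Hs. pose proof lam_pos. pose proof om_pos. pose proof K0_pos.
  eexists. split; [apply lyap_derivative; [lra|exact Hs]|].
  set (Z := slow_var mu t (y t) (v t)).
  pose proof (abs_le_inv _ _ (quadratic_form_bound _ _ _ B (y t) Z (HB1 t) (HB2 t) (HB3 t))) as HE.
  destruct (lyap_slow_bounds t (y t) (v t)) as [_ V2]. fold Z in V2.
  assert (HS : 0 <= y t ^ 2 + Z ^ 2) by nra.
  assert (Hdiss : om * (y t ^ 2 + Z ^ 2) <= alpha * (kappa * y t ^ 2 + Z ^ 2)).
  { assert (om <= alpha * kappa) by (unfold om; apply Rmult_le_compat_l; [lra|apply Rmin_l]).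
    assert (om <= alpha) by (unfold om; rewrite <- (Rmult_1_r alpha) at 2;
                             apply Rmult_le_compat_l; [lra|apply Rmin_r]).
    nra. }
  assert (Hrem : mu ^ 2 * (rem1 t * y t ^ 2 + rem2 t * y t * Z + rem3 t * Z ^ 2)
                 <= mu * (om / 2) * (y t ^ 2 + Z ^ 2)).
  { apply Rle_trans with (mu ^ 2 * (2 * B * (y t ^ 2 + Z ^ 2))).
    { apply Rmult_le_compat_l; [nra|lra]. }
    replace (mu ^ 2 * (2 * B * (y t ^ 2 + Z ^ 2)))
      with (mu * ((2 * B * mu) * (y t ^ 2 + Z ^ 2))) by ring.
    replace (mu * (om / 2) * (y t ^ 2 + Z ^ 2)) with (mu * ((om / 2) * (y t ^ 2 + Z ^ 2)))
      by ring.
    apply Rmult_le_compat_l; [lra|]. apply Rmult_le_compat_r; lra. }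
  assert (Hrate : mu * om / (2 * (K0 + lam / 2)) * lyap mu t (y t) (v t)
                  <= mu * (om / 2) * (y t ^ 2 + Z ^ 2)).
  { replace (mu * om / (2 * (K0 + lam / 2))) with (mu * (om / 2) / (K0 + lam / 2))
      by (field; lra).
    unfold Rdiv at 1. rewrite Rmult_assoc. apply Rmult_le_compat_l; [nra|].
    apply Rmult_le_reg_l with (K0 + lam / 2); [lra|].
    rewrite <- Rmult_assoc, Rinv_r, Rmult_1_l by lra. lra. }
  assert (mu * (om * (y t ^ 2 + Z ^ 2)) <= mu * (alpha * (kappa * y t ^ 2 + Z ^ 2)))
    by (apply Rmult_le_compat_l; lra).
  lra.
Qed.

Lemma small_parameter_asympt_stable :
  asympt_stable (alpha * mu) (fun t => beta * mu ^ 2 + mu * phi t).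
Proof.
  pose proof lam_pos. pose proof om_pos. pose proof K0_pos.
  assert (0 < 2 / mu ^ 2) by (apply Rdiv_lt_0_compat; nra).
  apply lyapunov_asympt_stable with (Vf := lyap mu) (c := mu * om / (2 * (K0 + lam / 2)))
    (k1 := lam / 2 / (1 + 2 * mu ^ 2 * (1 + B ^ 2)))
    (k2 := (K0 + lam / 2) * (1 + 2 * B ^ 2 + 2 / mu ^ 2)).
  - apply Rdiv_lt_0_compat; nra.
  - apply Rdiv_lt_0_compat; nra.
  - nra.
  - exact lyap_bounds.
  - intros y v Hs t. exact (lyap_decrease y v t Hs).
Qed.

End SmallParameter.

Theorem averaged_asympt_stable (M : R) :
  (forall t, Rabs (F t) <= M) -> (forall t, Rabs (G1 t) <= M) ->
  (forall t, Rabs (G2 t) <= M) ->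
  exists mu0, 0 < mu0 /\ forall mu, 0 < mu <= mu0 ->
    asympt_stable (alpha * mu) (fun t => beta * mu ^ 2 + mu * phi t).
Proof.
  intros HFb HG1b HG2b.
  assert (Bp : exists b, forall t, Rabs (corr_p t) <= b)
    by (eexists; intros t; unfold corr_p; bound_tac).
  assert (Bq : exists b, forall t, Rabs (corr_q t) <= b)
    by (eexists; intros t; unfold corr_q; bound_tac).
  assert (Br : exists b, forall t, Rabs (corr_r t) <= b)
    by (eexists; intros t; unfold corr_r; bound_tac).
  assert (B1 : exists b, forall t, Rabs (rem1 t) <= b)
    by (eexists; intros t; unfold rem1, corr_p, corr_q; bound_tac).
  assert (B2 : exists b, forall t, Rabs (rem2 t) <= b)
    by (eexists; intros t; unfold rem2, corr_p, corr_q, corr_r; bound_tac).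
  assert (B3 : exists b, forall t, Rabs (rem3 t) <= b)
    by (eexists; intros t; unfold rem3, corr_q, corr_r; bound_tac).
  destruct Bp as [bp Hbp], Bq as [bq Hbq], Br as [br Hbr],
           B1 as [b1 Hb1], B2 as [b2 Hb2], B3 as [b3 Hb3].
  set (B := 1 + Rabs bp + Rabs bq + Rabs br + Rabs b1 + Rabs b2 + Rabs b3 + Rabs M).
  pose proof (Rabs_pos bp); pose proof (Rabs_pos bq); pose proof (Rabs_pos br);
    pose proof (Rabs_pos b1); pose proof (Rabs_pos b2); pose proof (Rabs_pos b3);
    pose proof (Rabs_pos M).
  assert (HB : 1 <= B) by (unfold B; lra).
  assert (Hbnd : forall x b, Rabs x <= b -> Rabs b <= B - 1 -> Rabs x <= B).
  { intros x b Hx Hb. pose proof (Rle_abs b). lra. }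
  pose proof lam_pos. pose proof om_pos.
  exists (Rmin (lam / (4 * B)) (om / (4 * B))). split.
  { apply Rmin_glb_lt; apply Rdiv_lt_0_compat; lra. }
  intros mu [Hmu Hmu0].
  assert (Hsmall : forall x, 0 < x -> mu <= x / (4 * B) -> 2 * B * mu <= x / 2).
  { intros x Hx Hle. apply Rmult_le_compat_l with (r := 4 * B) in Hle; [|lra].
    replace (4 * B * (x / (4 * B))) with x in Hle by (field; lra). lra. }
  apply (small_parameter_asympt_stable B mu).
  - intros t. apply (Hbnd _ M (HFb t)). unfold B; lra.
  - intros t. apply (Hbnd _ bp (Hbp t)). unfold B; lra.
  - intros t. apply (Hbnd _ bq (Hbq t)). unfold B; lra.
  - intros t. apply (Hbnd _ br (Hbr t)). unfold B; lra.
  - intros t. apply (Hbnd _ b1 (Hb1 t)). unfold B; lra.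
  - intros t. apply (Hbnd _ b2 (Hb2 t)). unfold B; lra.
  - intros t. apply (Hbnd _ b3 (Hb3 t)). unfold B; lra.
  - exact Hmu.
  - apply Hsmall; [exact lam_pos|]. eapply Rle_trans; [exact Hmu0|apply Rmin_l].
  - apply Hsmall; [exact om_pos|]. eapply Rle_trans; [exact Hmu0|apply Rmin_r].
Qed.

End Averaging.

Definition centered (g : R -> R) (T : R) (t : R) : R := g t - / T * RInt g 0 T.

Lemma centered_RInt (g : R -> R) T : 0 < T -> (forall t, continuous g t) ->
  RInt (centered g T) 0 T = 0.
Proof.
  intros HT Hg. unfold centered.
  rewrite RInt_minus', RInt_const'; [| apply ex_RInt_cont; auto
                                     | apply ex_RInt_cont; intros; apply continuous_const].
  real_eq. field. lra.
Qed.

Lemma centered_continuous (g : R -> R) T : (forall t, continuous g t) ->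
  forall t, continuous (centered g T) t.
Proof.
  intros Hc t. apply (@continuous_minus R_UniformSpace R_AbsRing R_NormedModule);
    [apply Hc|apply continuous_const].
Qed.

Lemma centered_periodic (g : R -> R) T : (forall t, g (t + T) = g t) ->
  forall t, centered g T (t + T) = centered g T t.
Proof. intros Hp t. unfold centered. rewrite Hp. reflexivity. Qed.

Lemma centered_primitive_bounded (g : R -> R) T : 0 < T -> (forall t, continuous g t) ->
  (forall t, g (t + T) = g t) ->
  (forall t, is_derive (fun x => RInt (centered g T) 0 x) t (centered g T t)) /\
  exists M, forall t, Rabs (RInt (centered g T) 0 t) <= M.
Proof.
  intros HT Hc Hp.
  pose proof (centered_continuous g T Hc) as Hcc.
  assert (Hd : forall t, is_derive (fun x => RInt (centered g T) 0 x) t (centered g T t))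
    by (intros; apply derive_primitive; exact Hcc).
  split; [exact Hd|].
  apply periodic_bounded with T; auto.
  - intros t. eapply continuous_of_derive. apply Hd.
  - intros t. apply primitive_periodic; auto.
    + apply centered_periodic; exact Hp.
    + apply centered_RInt; auto.
Qed.

Lemma primitive_RInt_by_parts (phi : R -> R) T : (forall t, continuous phi t) ->
  RInt (fun tau => RInt phi 0 tau) 0 T + RInt (fun tau => tau * phi tau) 0 T
  = T * RInt phi 0 T.
Proof.
  intros Hc.
  set (Phi := fun t => RInt phi 0 t).
  assert (HPd : forall t, is_derive Phi t (phi t)) by (intros; apply derive_primitive; auto).
  assert (Htphi : forall x, continuous (fun tau => tau * phi tau) x).
  { intros x. apply (@continuous_mult R_UniformSpace R_AbsRing); [apply continuous_id|apply Hc]. }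
  assert (Hi : is_RInt (fun tau => Phi tau + tau * phi tau) 0 T
                 (minus (T * Phi T) (0 * Phi 0))).
  { apply (is_RInt_derive (fun tau => tau * Phi tau)).
    - intros x _. eapply derive_eq.
      + apply (derive_mult (fun x => x) Phi); [apply derive_id|apply HPd].
      + real_eq. ring.
    - intros x _. apply (@continuous_plus R_UniformSpace R_AbsRing R_NormedModule).
      + eapply continuous_of_derive; apply HPd.
      + apply Htphi. }
  apply (@is_RInt_unique R_CompleteNormedModule) in Hi.
  rewrite RInt_plus' in Hi; [| apply ex_RInt_cont; intros; eapply continuous_of_derive; apply HPd
                             | apply ex_RInt_cont; exact Htphi].
  rewrite Hi. unfold minus, plus, opp; simpl. real_eq. ring.
Qed.

Lemma centered_sqr_mean (g : R -> R) T : 0 < T -> (forall t, continuous g t) ->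
  / T * RInt (fun x => centered g T x ^ 2) 0 T
  = / T * RInt (fun x => g x ^ 2) 0 T - (/ T * RInt g 0 T) ^ 2.
Proof.
  intros HT Hc. unfold centered.
  set (m := / T * RInt g 0 T).
  rewrite (RInt_ext _ (fun x => g x ^ 2 + (-2 * m) * g x + m ^ 2))
    by (intros; real_eq; ring).
  assert (Hg2 : forall x, continuous (fun x => g x ^ 2) x).
  { intros x. apply (@continuous_mult R_UniformSpace R_AbsRing); [apply Hc|].
    apply (@continuous_mult R_UniformSpace R_AbsRing); [apply Hc|apply continuous_const]. }
  assert (Hmg : forall x, continuous (fun x => -2 * m * g x) x).
  { intros x. apply (@continuous_mult R_UniformSpace R_AbsRing); [apply continuous_const|apply Hc]. }
  rewrite RInt_plus', RInt_plus', RInt_scal', RInt_const';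
    try (apply ex_RInt_cont; auto; intros; apply continuous_const).
  - unfold m. real_eq. field. lra.
  - apply ex_RInt_cont. intros x.
    apply (@continuous_plus R_UniformSpace R_AbsRing R_NormedModule); auto.
Qed.

(* Let [Phi] be the primitive of [phi] (periodic since [phi] has
   zero mean), [F] the centered [Phi], [G1] the primitive of [F] and [G2] the
   primitive of the centered [F^2].  These are bounded, and the hypothesis says
   exactly that [kappa = betah + mean(F^2)] is positive, so the averaging
   argument applies. *)
Theorem mainTheorem1 (T alpha betah : R) (phi : R -> R) :
  0 < T -> 0 < alpha -> betah < 0 ->
  (forall t, continuous phi t) ->
  (forall t, phi (t + T) = phi t) ->
  RInt phi 0 T = 0 ->
  / T * RInt (fun tau => (RInt phi 0 tau) ^ 2) 0 T >
    (/ T * RInt (fun tau => tau * phi tau) 0 T) ^ 2 - betah ->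
  exists mu0, 0 < mu0 /\
    forall mu, 0 < mu <= mu0 ->
      asympt_stable (alpha * mu) (fun t => betah * mu ^ 2 + mu * phi t).
Proof.
  intros HT Ha _ Hc Hp H0 Hmain.
  set (Phi := fun t => RInt phi 0 t).
  assert (HPd : forall t, is_derive Phi t (phi t)) by (intros; apply derive_primitive; auto).
  assert (HPc : forall t, continuous Phi t) by (intros; eapply continuous_of_derive; apply HPd).
  assert (HPp : forall t, Phi (t + T) = Phi t) by (intros; apply primitive_periodic; auto).
  set (F := centered Phi T).
  assert (HFd : forall t, is_derive F t (phi t)).
  { intros t. eapply derive_eq; [apply derive_minus; [apply HPd|apply derive_const]|].
    real_eq; ring. }
  pose proof (centered_continuous Phi T HPc) as HFc.
  pose proof (centered_periodic Phi T HPp) as HFp.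
  set (F2 := fun t => F t ^ 2).
  assert (HF2c : forall t, continuous F2 t)
    by (intros; eapply continuous_of_derive; apply derive_sqr, HFd).
  assert (HF2p : forall t, F2 (t + T) = F2 t) by (intros; unfold F2; rewrite HFp; reflexivity).
  destruct (periodic_bounded F T HT HFc HFp) as [M0 HM0].
  destruct (centered_primitive_bounded Phi T HT HPc HPp) as [HG1d [M1 HM1]].
  fold F in HG1d, HM1.
  destruct (centered_primitive_bounded F2 T HT HF2c HF2p) as [HG2d [M2 HM2]].
  (* kappa > 0: mean(F^2) = mean(Phi^2) - mean(Phi)^2, and by parts
     mean(Phi) = - mean(tau phi(tau)) *)
  assert (Hkappa : 0 < betah + / T * RInt F2 0 T).
  { unfold F2, F. rewrite centered_sqr_mean by auto.
    pose proof (primitive_RInt_by_parts phi T Hc) as Hparts.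
    rewrite H0, Rmult_0_r in Hparts. fold Phi in Hparts.
    replace (RInt Phi 0 T) with (- RInt (fun tau => tau * phi tau) 0 T) by lra.
    replace ((/ T * - RInt (fun tau => tau * phi tau) 0 T) ^ 2)
      with ((/ T * RInt (fun tau => tau * phi tau) 0 T) ^ 2) by ring.
    unfold Phi. lra. }
  apply (averaged_asympt_stable alpha betah (/ T * RInt F2 0 T) phi F
           (fun t => RInt F 0 t) (fun t => RInt (centered F2 T) 0 t)
           Ha Hkappa HFd HG1d HG2d (Rabs M0 + Rabs M1 + Rabs M2));
    intros t; [pose proof (HM0 t) | pose proof (HM1 t) | pose proof (HM2 t)];
    pose proof (Rle_abs M0); pose proof (Rle_abs M1); pose proof (Rle_abs M2);
    pose proof (Rabs_pos M0); pose proof (Rabs_pos M1); pose proof (Rabs_pos M2); lra.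
Qed.
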